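(* Let $f:\mathbb{R}^p\to\mathbb{R}$ be twice differentiable, let $k^*$ be a positive integer and $\vec w^*=\arg\min_{\vec w:\ \|\vec w\|_0^{\mathcal{G}}\le k^*}f(\vec w)$. Let $k'=2k+k^*$, where $k=O\!\left(\left(\frac{L_{k'}}{\alpha_{k'}}\right)^2k^*\right)$, and suppose $f$ satisfies RSC/RSS of order $k'$ with constants $\alpha_{k'},L_{k'}$. Run the IHT algorithm with step size $\eta=1/L_{k'}$ and with the exact projection $P_k^{\mathcal{G}}$. Then for $\epsilon>0$, the iterate $\vec w_T$ with $T=O\!\left(\frac{L_{k'}}{\alpha_{k'}}\cdot\frac{\|\vec w^*\|_2}{\epsilon}\right)$ satisfies \[ \|\vec w_T-\vec w^*\|_2\le\epsilon+\frac{10L_{k'}}{\alpha_{k'}}\gamma,\qquad \gamma=\frac{2}{L_{k'}}\max_{S:\ |\operatorname{G-supp}(S)|\le k}\|(\nabla f(\vec w^* ))_S\|_2. \]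
   Context: Groups $\mathcal{G}=\{G_1,\dots,G_M\}$, $G_i\subseteq[p]$, $\bigcup_iG_i=[p]$. For $S\subseteq[p]$, $\vec v_S$ agrees with $\vec v$ on $S$ and is $0$ elsewhere. $\|\vec w\|_0^{\mathcal{G}}$ is the minimum number of nonzero terms in a decomposition $\vec w=\sum_i\vec a_{G_i}$ with $\operatorname{supp}(\vec a_{G_i})\subseteq G_i$ (the minimum number of groups covering $\operatorname{supp}(\vec w)$); $|\operatorname{G-supp}(S)|$ is the minimum number of groups whose union covers $S$. RSC/RSS of order $k$ with constants $\alpha_k,L_k$: $\alpha_kI\preceq\nabla^2f(\vec w)\preceq L_kI$ for all $\vec w$ with $\|\vec w\|_0^{\mathcal{G}}\le k$. Exact projection: $P_k^{\mathcal{G}}(\vec g)=\arg\min_{\vec w}\|\vec w-\vec g\|_2^2$ subject to $\|\vec w\|_0^{\mathcal{G}}\le k$. IHT algorithm: start from a $k$-group sparse $\vec w_0$ and iterate $\vec w_{t+1}=P_k^{\mathcal{G}}(\vec w_t-\eta\nabla f(\vec w_t))$. *)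

From HB Require Import structures.
From mathcomp Require Import all_boot all_order all_algebra.
From mathcomp Require Import all_classical all_reals all_analysis.
Set Implicit Arguments. Unset Strict Implicit. Unset Printing Implicit Defensive.
Import Order.TTheory GRing.Theory Num.Theory.
Import numFieldNormedType.Exports.
Local Open Scope ring_scope.

Section Defs.
Variable R : realType.
Variables (p M : nat).

Definition norm2 (v : 'rV[R]_p) : R := Num.sqrt (\sum_(i < p) v ord0 i ^+ 2).

Definition vsupp (v : 'rV[R]_p) : {set 'I_p} := [set i | v ord0 i != 0].

Definition restrict (v : 'rV[R]_p) (S : {set 'I_p}) : 'rV[R]_p :=
  \row_i (if i \in S then v ord0 i else 0).

(* |G-supp(S)| : minimum number of groups whose union covers S
   (the default value M is attained by the full family since groups cover [p]) *)
Definition Gsupp_card (G : 'I_M -> {set 'I_p}) (S : {set 'I_p}) : nat :=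
  \big[minn/M]_(I : {set 'I_M} | S \subset \bigcup_(i in I) G i) #|I|.

Definition gnorm0 (G : 'I_M -> {set 'I_p}) (w : 'rV[R]_p) : nat :=
  Gsupp_card G (vsupp w).

Definition groups_cover (G : 'I_M -> {set 'I_p}) : Prop :=
  \bigcup_(i < M) G i = [set: 'I_p].

Definition grad (f : 'rV[R]_p -> R) (w : 'rV[R]_p) : 'rV[R]_p :=
  \row_i ('D_(delta_mx ord0 i) f w).

Definition twice_differentiable (f : 'rV[R]_p -> R) : Prop :=
  (forall x, differentiable f x) /\
  (forall (v x : 'rV[R]_p), differentiable ('D_v f) x).

(* v^T (Hessian of f at w) v, the second directional derivative *)
Definition hess_quad (f : 'rV[R]_p -> R) (w v : 'rV[R]_p) : R :=
  'D_v ('D_v f) w.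

Definition RSC_RSS (G : 'I_M -> {set 'I_p}) (f : 'rV[R]_p -> R) (k : nat)
  (alpha L : R) : Prop :=
  forall w : 'rV[R]_p, (gnorm0 G w <= k)%N ->
    forall v : 'rV[R]_p,
      alpha * norm2 v ^+ 2 <= hess_quad f w v /\ hess_quad f w v <= L * norm2 v ^+ 2.

Definition is_proj (G : 'I_M -> {set 'I_p}) (k : nat) (g y : 'rV[R]_p) : Prop :=
  (gnorm0 G y <= k)%N /\
  forall x : 'rV[R]_p, (gnorm0 G x <= k)%N -> norm2 (y - g) <= norm2 (x - g).

Definition IHT_run (G : 'I_M -> {set 'I_p}) (f : 'rV[R]_p -> R) (k : nat)
  (eta : R) (w : nat -> 'rV[R]_p) : Prop :=
  forall t, is_proj G k (w t - eta *: grad f (w t)) (w t.+1).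

Definition max_restr (G : 'I_M -> {set 'I_p}) (k : nat) (v : 'rV[R]_p) : R :=
  \big[Num.max/0]_(S : {set 'I_p} | (Gsupp_card G S <= k)%N) norm2 (restrict v S).

End Defs.

From Pilot Require Import Defs.
From HB Require Import structures.
From mathcomp Require Import all_boot all_order all_algebra.
From mathcomp Require Import all_classical all_reals all_analysis.
From mathcomp Require Import ring lra zify.
Import Order.TTheory GRing.Theory Num.Theory.
Import numFieldNormedType.Exports.
Local Open Scope ring_scope.

(* Let s = alpha / (4 L).  The current iterate, the next one and wstar are all
   supported on a union U of at most 2k + kstar groups, on which f is alpha-strongly
   convex and L-smooth.  Restricted to U, the gradient step x - L^-1 grad f x moves
   towards wstar by a factor 1 - 2s, up to L^-1 times the gradient of f at wstar on U,
   which is at most 2 max_restr.  The exact projection loses at most a factor 1 + s: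
   by an exchange argument against the k-group-sparse competitors, the mass it discards
   on the support of wstar is at most kstar / k <= s^2 times the mass it keeps outside
   that support.  Hence e_(t+1) <= (1 - s) e_t + s B with B = 10 max_restr / alpha,
   and T >= norm2 wstar / (eps s) steps bring (1 - s)^T norm2 wstar below eps. *)

Set Implicit Arguments. Unset Strict Implicit. Unset Printing Implicit Defensive.
Local Notation restrict := Defs.restrict.

Section SecondOrderBounds.
Variable R : realType.

Lemma scalerRE (a x : R) : a *: x = a * x.
Proof. by []. Qed.

Lemma deriv_le0_le (h dh : R -> R) (a b : R) : a <= b ->
  (forall x, is_derive x (1 : R) h (dh x)) -> (forall x, a <= x <= b -> dh x <= 0) ->
  h b <= h a.
Proof.
move=> ab hd dh_le0.
have [c cab hba] := MVT_segment ab (fun x _ => hd x)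
  (derivable_within_continuous (fun x _ => @ex_derive _ _ _ _ _ _ _ (hd x))).
rewrite -subr_le0 hba mulr_le0_ge0 ?subr_ge0 //; apply: dh_le0.
by move: cab; rewrite in_itv.
Qed.

Lemma taylor2_le (g g1 g2 : R -> R) (B : R) :
  (forall x, is_derive x (1 : R) g (g1 x)) -> (forall x, is_derive x (1 : R) g1 (g2 x)) ->
  (forall x, g2 x <= B) -> g 1 - g 0 - g1 0 <= B / 2.
Proof.
move=> dg dg1 g2_le.
have g1_le x : 0 <= x -> g1 x <= g1 0 + B * x.
  move=> x_ge0; rewrite -lerBlDr.
  have := @deriv_le0_le (fun t => g1 t - B * t) (fun t => g2 t - B) 0 x x_ge0.
  rewrite mulr0 subr0; apply=> [t|t _]; last by rewrite subr_le0.
  by apply: is_derive_eq; rewrite scalerRE mulr1.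
suff : g 1 - g1 0 * 1 - B / 2 * 1 ^+ 2 <= g 0 - g1 0 * 0 - B / 2 * 0 ^+ 2.
  by rewrite expr1n expr0n /= !mulr0 !subr0 !mulr1; lra.
apply: (@deriv_le0_le (fun t => g t - g1 0 * t - B / 2 * t ^+ 2)
  (fun t => g1 t - g1 0 - B / 2 * (2 * t)) 0 1 ler01).
  by move=> t; apply: is_derive_eq; rewrite !scalerRE; ring.
move=> t /andP[t_ge0 _]; have := g1_le t t_ge0.
have -> : B / 2 * (2 * t) = B * t by field.
lra.
Qed.

Lemma taylor2_ge (g g1 g2 : R -> R) (A : R) :
  (forall x, is_derive x (1 : R) g (g1 x)) -> (forall x, is_derive x (1 : R) g1 (g2 x)) ->
  (forall x, A <= g2 x) -> A / 2 <= g 1 - g 0 - g1 0.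
Proof.
move=> dg dg1 g2_ge.
have := @taylor2_le (fun x => - g x) (fun x => - g1 x) (fun x => - g2 x) (- A).
have dN (h : R -> R) dh x :
  is_derive x (1 : R) h dh -> is_derive x (1 : R) (fun y => - h y) (- dh) by exact: is_deriveN.
move=> /(_ (fun x => dN _ _ _ (dg x)) (fun x => dN _ _ _ (dg1 x))).
by move=> /(_ (fun x => ltac:(by rewrite lerN2))); lra.
Qed.

End SecondOrderBounds.

Section Euclidean.
Variables (R : realType) (p : nat).
Local Notation V := 'rV[R]_p.
Implicit Types u v w : V.

Definition dot u v : R := \sum_(i < p) u ord0 i * v ord0 i.
Definition sqnorm v : R := \sum_(i < p) v ord0 i ^+ 2.

Lemma sqnormE v : sqnorm v = dot v v.
Proof. by apply: eq_bigr => i _; rewrite expr2. Qed.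

Lemma sqnorm_ge0 v : 0 <= sqnorm v.
Proof. by apply: sumr_ge0 => i _; rewrite sqr_ge0. Qed.

Lemma sqnorm_eq0 v : sqnorm v = 0 -> v = 0.
Proof.
move=> /eqP; rewrite psumr_eq0 => [/allP v0|i _]; last exact: sqr_ge0.
apply/rowP => i; rewrite mxE; apply/eqP; rewrite -sqrf_eq0.
exact: v0 i (mem_index_enum i).
Qed.

Lemma dotC u v : dot u v = dot v u.
Proof. by apply: eq_bigr => i _; rewrite mulrC. Qed.

Lemma dotDl u v w : dot (u + v) w = dot u w + dot v w.
Proof. by rewrite /dot -big_split; apply: eq_bigr => i _; rewrite mxE mulrDl. Qed.

Lemma dotZl (a : R) u w : dot (a *: u) w = a * dot u w.
Proof. by rewrite /dot mulr_sumr; apply: eq_bigr => i _; rewrite mxE mulrA. Qed.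

Lemma dotNl u w : dot (- u) w = - dot u w.
Proof. by rewrite -scaleN1r dotZl mulN1r. Qed.

Lemma dotBl u v w : dot (u - v) w = dot u w - dot v w.
Proof. by rewrite dotDl dotNl. Qed.

Lemma dotDr u v w : dot w (u + v) = dot w u + dot w v.
Proof. by rewrite !(dotC w) dotDl. Qed.

Lemma dotZr (a : R) u w : dot w (a *: u) = a * dot w u.
Proof. by rewrite !(dotC w) dotZl. Qed.

Lemma dotNr u w : dot w (- u) = - dot w u.
Proof. by rewrite !(dotC w) dotNl. Qed.

Lemma dotBr u v w : dot w (u - v) = dot w u - dot w v.
Proof. by rewrite !(dotC w) dotBl. Qed.

Lemma sqnormD u v : sqnorm (u + v) = sqnorm u + 2 * dot u v + sqnorm v.
Proof. rewrite !sqnormE dotDl !dotDr (dotC v u); ring. Qed.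

Lemma sqnormB u v : sqnorm (u - v) = sqnorm u - 2 * dot u v + sqnorm v.
Proof. rewrite !sqnormE dotBl !dotBr (dotC v u); ring. Qed.

Lemma sqnormZ (a : R) v : sqnorm (a *: v) = a ^+ 2 * sqnorm v.
Proof. rewrite !sqnormE dotZl dotZr; ring. Qed.

Lemma sqnormN v : sqnorm (- v) = sqnorm v.
Proof. by rewrite -scaleN1r sqnormZ sqrrN expr1n mul1r. Qed.

(* Expand [sqnorm (u - t v) >= 0] at [t = dot u v / sqnorm v]. *)
Lemma dot_sqr_le u v : dot u v ^+ 2 <= sqnorm u * sqnorm v.
Proof.
have [v0|v_neq0] := eqVneq (sqnorm v) 0.
  by rewrite v0 mulr0 (sqnorm_eq0 v0) /dot big1 ?expr0n // => i _; rewrite mxE mulr0.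
have v_gt0 : 0 < sqnorm v by rewrite lt0r v_neq0 sqnorm_ge0.
have := sqnorm_ge0 (u - (dot u v / sqnorm v) *: v).
rewrite sqnormB sqnormZ dotZr => h; rewrite -subr_ge0.
have -> : sqnorm u * sqnorm v - dot u v ^+ 2 = (sqnorm u - 2 * (dot u v / sqnorm v
  * dot u v) + (dot u v / sqnorm v) ^+ 2 * sqnorm v) * sqnorm v by field.
exact: mulr_ge0 h (ltW v_gt0).
Qed.

Lemma sqr_norm2 v : norm2 v ^+ 2 = sqnorm v.
Proof. by rewrite sqr_sqrtr // sqnorm_ge0. Qed.

Lemma norm2_ge0 v : 0 <= norm2 v.
Proof. exact: sqrtr_ge0. Qed.

Lemma ler_norm2 u v : (norm2 u <= norm2 v) = (sqnorm u <= sqnorm v).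
Proof. by rewrite -ler_sqr ?nnegrE ?norm2_ge0 // !sqr_norm2. Qed.

Lemma norm2_le_sqr v (c : R) : 0 <= c -> sqnorm v <= c ^+ 2 -> norm2 v <= c.
Proof. by move=> c_ge0; rewrite -sqr_norm2 ler_sqr // nnegrE norm2_ge0. Qed.

Lemma dot_le_norm2 u v : dot u v <= norm2 u * norm2 v.
Proof.
have [uv_le0|uv_gt0] := lerP (dot u v) 0.
  by rewrite (le_trans uv_le0) // mulr_ge0 ?norm2_ge0.
rewrite -ler_sqr ?nnegrE ?mulr_ge0 ?norm2_ge0 ?(ltW uv_gt0) //.
by rewrite exprMn !sqr_norm2 dot_sqr_le.
Qed.

Lemma norm2D u v : norm2 (u + v) <= norm2 u + norm2 v.
Proof.
apply: norm2_le_sqr; first by rewrite addr_ge0 ?norm2_ge0.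
rewrite sqnormD sqrrD !sqr_norm2 lerD2r lerD2l.
have := dot_le_norm2 u v; lra.
Qed.

Lemma norm2N v : norm2 (- v) = norm2 v.
Proof. by rewrite /norm2 -/(sqnorm _) sqnormN. Qed.

Lemma norm2Z (a : R) v : 0 <= a -> norm2 (a *: v) = a * norm2 v.
Proof.
by move=> a_ge0; rewrite /norm2 -!/(sqnorm _) sqnormZ sqrtrM ?sqr_ge0 // sqrtr_sqr ger0_norm.
Qed.

End Euclidean.

Section Supports.
Variables (R : realType) (p : nat).
Local Notation V := 'rV[R]_p.
Implicit Types (u v w : V) (A B U : {set 'I_p}).

Lemma vsupp_subP U v : reflect (forall i, i \notin U -> v ord0 i = 0) (vsupp v \subset U).
Proof.
apply: (iffP fintype.subsetP) => [vU i|vU i]; last by rewrite inE; apply: contraR => /vU ->.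
by apply: contraNeq => v_neq0; apply: vU; rewrite inE.
Qed.

Lemma vsupp0 : vsupp (0 : V) = finset.set0.
Proof. by apply/setP => i; rewrite !inE mxE eqxx. Qed.

Lemma vsupp_subD U u v : vsupp u \subset U -> vsupp v \subset U -> vsupp (u + v) \subset U.
Proof.
move=> /vsupp_subP uU /vsupp_subP vU.
by apply/vsupp_subP => i iU; rewrite mxE uU ?vU ?addr0.
Qed.

Lemma vsupp_subZ U (a : R) v : vsupp v \subset U -> vsupp (a *: v) \subset U.
Proof. by move=> /vsupp_subP vU; apply/vsupp_subP => i iU; rewrite mxE vU ?mulr0. Qed.

Lemma vsupp_subB U u v : vsupp u \subset U -> vsupp v \subset U -> vsupp (u - v) \subset U.
Proof. by move=> uU vU; rewrite vsupp_subD // -scaleN1r vsupp_subZ. Qed.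

Lemma restrictE v U i : restrict v U ord0 i = if i \in U then v ord0 i else 0.
Proof. exact: mxE. Qed.

Lemma vsupp_restrict v U : vsupp (restrict v U) \subset U.
Proof. by apply/vsupp_subP => i /negbTE iU; rewrite restrictE iU. Qed.

Lemma restrict_id v U : vsupp v \subset U -> restrict v U = v.
Proof.
by move=> /vsupp_subP vU; apply/rowP => i; rewrite restrictE; case: ifPn => // /vU ->.
Qed.

Lemma restrictB u v U : restrict (u - v) U = restrict u U - restrict v U.
Proof. by apply/rowP => i; rewrite !mxE; case: ifP; rewrite ?subr0. Qed.

Lemma restrictN v U : restrict (- v) U = - restrict v U.
Proof. by apply/rowP => i; rewrite !mxE; case: ifP; rewrite ?oppr0. Qed.

Lemma restrictZ (a : R) v U : restrict (a *: v) U = a *: restrict v U.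
Proof. by apply/rowP => i; rewrite !mxE; case: ifP; rewrite ?mulr0. Qed.

Definition mass v A : R := \sum_(i in A) v ord0 i ^+ 2.

Lemma mass_ge0 v A : 0 <= mass v A.
Proof. by apply: sumr_ge0 => i _; exact: sqr_ge0. Qed.

Lemma mass_subset v A B : A \subset B -> mass v A <= mass v B.
Proof.
move=> AB; rewrite /mass [X in _ <= X](big_setID A) /= (finset.setIidPr AB) lerDl.
exact: mass_ge0.
Qed.

Lemma mass_le_sqnorm v A : mass v A <= sqnorm v.
Proof.
rewrite /sqnorm [X in _ <= X](bigID (mem A)) /= lerDl.
by apply: sumr_ge0 => i _; exact: sqr_ge0.
Qed.

Lemma mass_setUD v A B : mass v (A :|: B) = mass v A + mass v (B :\: A).
Proof.
rewrite /mass (big_setID A) /= (finset.setIidPr (finset.subsetUl A B)).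
by rewrite finset.setDUl finset.setDv finset.set0U.
Qed.

Lemma sqnorm_restrictB v U : sqnorm (restrict v U - v) = sqnorm v - mass v U.
Proof.
rewrite [sqnorm v](bigID (mem U)) /= addrAC subrr add0r /sqnorm.
rewrite (bigID (mem U)) /= big1 ?add0r => [|i iU]; last by rewrite !mxE iU subrr expr0n.
by apply: eq_bigr => i /negbTE iU; rewrite !mxE iU sub0r sqrrN.
Qed.

Lemma sqnorm_restrictU v A B :
  sqnorm (restrict v (A :|: B)) <= sqnorm (restrict v A) + sqnorm (restrict v B).
Proof.
rewrite /sqnorm -big_split; apply: ler_sum => i _; rewrite !restrictE inE.
by case: (i \in A); case: (i \in B); rewrite /= ?expr0n ?addr0 ?add0r ?lerDl ?sqr_ge0.
Qed.

Lemma dot_restrictl v w U : vsupp w \subset U -> dot (restrict v U) w = dot v w.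
Proof.
move=> /vsupp_subP wU; apply: eq_bigr => i _; rewrite restrictE.
by case: ifPn => // /wU ->; rewrite !mulr0.
Qed.

Lemma dot_restrictr v U : dot v (restrict v U) = sqnorm (restrict v U).
Proof.
by rewrite sqnormE; apply: eq_bigr => i _; rewrite !restrictE; case: ifP; rewrite ?mulr0.
Qed.

End Supports.

Section GroupCovers.
Variables (p M : nat) (G : 'I_M -> {set 'I_p}).
Implicit Types (S : {set 'I_p}) (I J : {set 'I_M}).

Definition gcover (I : {set 'I_M}) : {set 'I_p} := \bigcup_(j in I) G j.

Lemma gcoverU I J : gcover (I :|: J) = gcover I :|: gcover J.
Proof. exact: finset.bigcup_setU. Qed.

Lemma gcoverS I J : I \subset J -> gcover I \subset gcover J.
Proof.
by move=> IJ; apply/bigcupsP => j jI; apply/finset.bigcup_sup/(fintype.subsetP IJ).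
Qed.

Lemma Gsupp_card_le S I : S \subset gcover I -> (Gsupp_card G S <= #|I|)%N.
Proof.
move=> SI.
by have := @bigmin_le_cond _ nat _ M I (fun I => S \subset gcover I) (fun I => #|I|) SI.
Qed.

Lemma Gsupp_card_subset S S' : S \subset S' -> (Gsupp_card G S <= Gsupp_card G S')%N.
Proof.
move=> SS'; apply: (@sub_bigmin _ nat M _ _ (fun I : {set 'I_M} => S \subset gcover I)).
by move=> I; exact: fintype.subset_trans.
Qed.

Lemma Gsupp_card_gcover S : groups_cover G ->
  exists2 I, S \subset gcover I & #|I| = Gsupp_card G S.
Proof.
move=> GT.
have ST : S \subset gcover [set: 'I_M].
  apply: fintype.subset_trans (finset.subsetT S) _; rewrite -GT.
  by apply/bigcupsP => j _; apply: (finset.bigcup_sup j); rewrite inE.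
have card_le I : (#|I| <= M)%N by rewrite -[X in (_ <= X)%N]card_ord max_card.
have [I SI E] := @eq_bigmin _ nat _ M _ (fun I : {set 'I_M} => S \subset gcover I) _ ST
  (fun I _ => card_le I).
by exists I; rewrite // /Gsupp_card E.
Qed.

End GroupCovers.

Section LightSubset.
Variables (R : realType) (T : finType).
Implicit Types (c : T -> R) (J K : {set T}).

Lemma light_subset c (r : nat) J : (r <= #|J|)%N -> exists K,
  [/\ K \subset J, #|K| = r & #|J|%:R * \sum_(j in K) c j <= r%:R * \sum_(j in J) c j].
Proof.
have [n] := ubnP #|J|; elim: n J => // n IH J; rewrite ltnS => Jn rJ.
have [<-|rJ_neq] := eqVneq #|J| r; first by exists J.
have [j0 j0J] : exists j0, j0 \in J by apply/set0Pn; rewrite -card_gt0; lia.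
have [j1 j1J j1_max] : exists2 j1, j1 \in J & forall j, j \in J -> c j <= c j1.
  by case: (arg_maxP c j0J) => j1; exists j1.
have cardJ : #|J| = #|J :\ j1|.+1 by rewrite (cardsD1 j1 J) j1J.
have [K [KJ cardK HK]] := IH (J :\ j1) ltac:(lia) ltac:(lia).
exists K; split => //; first exact: fintype.subset_trans KJ (finset.subsetDl _ _).
have K_le : \sum_(j in K) c j <= r%:R * c j1.
  rewrite -cardK mulr_natl -sumr_const; apply: ler_sum => j jK.
  by apply: j1_max; move/(fintype.subsetP KJ): jK; rewrite inE => /andP[].
by rewrite cardJ (big_setD1 j1 j1J) /= -natr1 mulrDl mul1r mulrDr addrC lerD.
Qed.

Lemma light_fraction c J (k ks : nat) : (forall j, 0 <= c j) ->
  (#|J| <= k)%N -> (ks <= k)%N -> exists K, [/\ K \subset J, (#|J :\: K| + ks <= k)%N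
  & k%:R * \sum_(j in K) c j <= ks%:R * \sum_(j in J) c j].
Proof.
move=> c_ge0 Jk ksk; set r := (#|J| - (k - ks))%N.
have [K [KJ cardK HK]] := light_subset c (leq_subr (k - ks) #|J|).
exists K; split => //; first by rewrite cardsD (finset.setIidPr KJ) cardK; lia.
have SJ_ge0 : 0 <= \sum_(j in J) c j by apply: sumr_ge0.
have [J0|J_gt0] := posnP #|J|.
  have -> : K = finset.set0 by apply: cards0_eq; rewrite cardK /r J0.
  by rewrite big_set0 mulr0 mulr_ge0.
have rk : (r * k <= ks * #|J|)%N by nia.
rewrite -(ler_nat R) !natrM in rk.
rewrite -(ler_pM2l (_ : 0 < #|J|%:R)) ?ltr0n //.
have := ler_wpM2l (ler0n R k) HK; have := ler_wpM2r SJ_ge0 rk; nra.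
Qed.

End LightSubset.

Lemma sqrB_le_weighted (R : realFieldType) (a b s : R) : 0 < s ->
  (a - b) ^+ 2 <= (1 + s) * b ^+ 2 + (1 + s^-1) * a ^+ 2.
Proof.
move=> s_gt0; rewrite -subr_ge0.
have -> : (1 + s) * b ^+ 2 + (1 + s^-1) * a ^+ 2 - (a - b) ^+ 2 = (s * b + a) ^+ 2 / s.
  by field; rewrite gt_eqF.
by rewrite divr_ge0 ?sqr_ge0 ?(ltW s_gt0).
Qed.

Section Projection.
Variables (R : realType) (p M : nat) (G : 'I_M -> {set 'I_p}) (k : nat).
Local Notation V := 'rV[R]_p.
Local Notation gcover := (gcover G).
Implicit Types (g y : V) (W : {set 'I_p}).

Lemma sqnorm_split_restrict g y W : vsupp y \subset W ->
  sqnorm (y - g) = sqnorm (y - restrict g W) + sqnorm (restrict g W - g).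
Proof.
move=> /vsupp_subP yW; rewrite /sqnorm -big_split; apply: eq_bigr => i _ /=.
by rewrite !mxE; case: ifPn => [_|/yW ->]; rewrite subrr; ring.
Qed.

Lemma proj_restrict g y W : is_proj G k g y -> vsupp y \subset W ->
  (Gsupp_card G W <= k)%N -> y = restrict g W.
Proof.
move=> [_ y_opt] yW Wk.
have := y_opt (restrict g W) (leq_trans (Gsupp_card_subset G (vsupp_restrict g W)) Wk).
rewrite ler_norm2 (sqnorm_split_restrict g yW) -lerBrDr subrr => h.
apply/eqP; rewrite -subr_eq0; apply/eqP/sqnorm_eq0.
by apply/eqP; rewrite eq_le h sqnorm_ge0.
Qed.

Lemma proj_mass_le g W (W' : {set 'I_p}) : is_proj G k g (restrict g W) ->
  (Gsupp_card G W' <= k)%N -> mass g (W' :\: W) <= mass g (W :\: W').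
Proof.
move=> [_ opt] W'k.
have := opt (restrict g W') (leq_trans (Gsupp_card_subset G (vsupp_restrict g W')) W'k).
rewrite ler_norm2 !sqnorm_restrictB lerD2l lerN2 /mass (big_setID W).
by rewrite [X in _ <= X](big_setID W') /= finset.setIC lerD2l.
Qed.

Lemma sum_mass_label g (D : {set 'I_p}) (label : 'I_p -> 'I_M) (K : {set 'I_M}) :
  \sum_(j in K) mass g [set i in D | label i == j] = mass g [set i in D | label i \in K].
Proof.
rewrite /mass (partition_big label (mem K)) => [|i]; last by rewrite inE => /andP[].
apply: eq_bigr => j jK; apply: eq_bigl => i; rewrite !inE -andbA.
by case: eqP => [->|]; rewrite ?jK ?andbF.
Qed.

(* Exchange argument: [J :\: K] for a light [K] of size [#|J| - (k - ks)], together
   with [Is], supports a competitor of the projection. *)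
Lemma proj_mass_outside g y (J Is : {set 'I_M}) (ks : nat) :
  is_proj G k g y -> vsupp y \subset gcover J -> (#|J| <= k)%N ->
  (#|Is| <= ks)%N -> (ks <= k)%N ->
  k%:R * mass g (gcover Is :\: gcover J) <= ks%:R * mass g (gcover J :\: gcover Is).
Proof.
move=> yP yJ Jk Isks ksk; set W := gcover J; set Us := gcover Is.
have gWP : is_proj G k g (restrict g W).
  by rewrite -(proj_restrict yP yJ (leq_trans (Gsupp_card_le (fintype.subxx W)) Jk)).
have [M0|M_gt0] := posnP M.
  have -> : Us = finset.set0.
    by rewrite /Us /gcover big_pred0 // => j; exfalso; have := ltn_ord j; lia.
  by rewrite finset.set0D /mass big_set0 mulr0 mulr_ge0 ?mass_ge0.
pose label i := odflt (Ordinal M_gt0) [pick j in J | i \in G j].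
have labelP i : i \in W -> label i \in J /\ i \in G (label i).
  case/bigcupP => j jJ ij; rewrite /label; case: pickP => [j' /andP[]|/(_ j)] //=.
  by rewrite jJ ij.
pose c j := mass g [set i in W :\: Us | label i == j].
have [K [KJ JKk HK]] := @light_fraction _ _ c J k ks (fun j => mass_ge0 g _) Jk ksk.
set W' := gcover ((J :\: K) :|: Is).
have W'k : (Gsupp_card G W' <= k)%N.
  apply: leq_trans (Gsupp_card_le (fintype.subxx _)) _.
  by apply: leq_trans (leq_card_setU _ _).1 (leq_trans _ JKk); rewrite leq_add2l.
have UsW' : Us \subset W' by rewrite /W' gcoverU finset.subsetUr.
have WW'K : W :\: W' \subset [set i in W :\: Us | label i \in K].
  apply/fintype.subsetP => i; rewrite !inE => /andP[iW' iW].
  have [ilJ ilG] := labelP i iW.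
  rewrite iW andbT; apply/andP; split.
    by apply: contra iW' => iUs; apply: (fintype.subsetP UsW').
  apply: contraNT iW' => ilK; rewrite /W' gcoverU inE; apply/orP; left.
  by apply/bigcupP; exists (label i); rewrite // !inE ilK.
have mass_J : \sum_(j in J) c j = mass g (W :\: Us).
  rewrite sum_mass_label; congr mass; apply/setP => i; rewrite !inE.
  by case: (i \in W) (labelP i) => [/(_ isT)[->]|]; rewrite ?andbT ?andbF.
have mass_K : mass g (Us :\: W) <= \sum_(j in K) c j.
  rewrite sum_mass_label; apply: le_trans (mass_subset g WW'K).
  apply: le_trans (proj_mass_le gWP W'k).
  by apply: mass_subset; apply: finset.setSD.
rewrite -mass_J; apply: le_trans HK.
by rewrite ler_wpM2l.
Qed.

Lemma sqnorm_restrict_sub_le g wstar (W Us U : {set 'I_p}) (s : R) :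
  vsupp wstar \subset Us -> W \subset U -> Us \subset U -> 0 < s ->
  sqnorm (restrict g W - wstar) <= mass (restrict g U - wstar) W
    + (1 + s) * mass (restrict g U - wstar) (Us :\: W) + (1 + s^-1) * mass g (Us :\: W).
Proof.
move=> /vsupp_subP wUs /fintype.subsetP WU /fintype.subsetP UsU s_gt0.
rewrite /sqnorm /mass !mulr_sumr (big_mkcond (mem W)) !(big_mkcond (mem (Us :\: W))).
rewrite -!big_split /=; apply: ler_sum => i _.
rewrite !mxE !inE; case: (boolP (i \in W)) => [iW|iW] /=.
  by rewrite WU // !addr0.
case: (boolP (i \in Us)) => [iUs|/wUs ->] /=; last by rewrite subrr expr2 mulr0 !addr0.
rewrite UsU // sub0r.
have -> : (- wstar ord0 i) ^+ 2 = (g ord0 i - (g ord0 i - wstar ord0 i)) ^+ 2 by ring.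
by rewrite add0r sqrB_le_weighted.
Qed.

Lemma proj_dist_le g y wstar (J Is : {set 'I_M}) (ks : nat) (U : {set 'I_p}) (s : R) :
  is_proj G k g y -> vsupp y \subset gcover J -> (#|J| <= k)%N ->
  vsupp wstar \subset gcover Is -> (#|Is| <= ks)%N -> (ks <= k)%N -> (0 < k)%N ->
  gcover J \subset U -> gcover Is \subset U -> 0 < s -> ks%:R <= s ^+ 2 * k%:R ->
  sqnorm (y - wstar) <= (1 + s) ^+ 2 * sqnorm (restrict g U - wstar).
Proof.
move=> yP yJ Jk wIs Isks ksk k_gt0 JU IsU s_gt0 ks_le.
set W := gcover J; set Us := gcover Is; set e := restrict g U - wstar.
rewrite (proj_restrict yP yJ (leq_trans (Gsupp_card_le (fintype.subxx W)) Jk)).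
have out := proj_mass_outside yP yJ Jk Isks ksk.
have in_e : mass g (W :\: Us) <= mass e W.
  apply: le_trans (mass_subset e (finset.subsetDl W Us)); rewrite le_eqVlt; apply/orP; left.
  apply/eqP/eq_bigr => i; rewrite !inE => /andP[iUs iW].
  by rewrite !mxE (fintype.subsetP JU) // (vsupp_subP _ _ wIs) ?subr0.
have gD : mass g (Us :\: W) <= s ^+ 2 * mass e W.
  rewrite -(ler_pM2l (_ : 0 < k%:R)) ?ltr0n //; apply: le_trans out _.
  have := ler_wpM2r (mass_ge0 g (W :\: Us)) ks_le.
  have := ler_wpM2l (mulr_ge0 (sqr_ge0 s) (ler0n R k)) in_e.
  nra.
have gD' : (1 + s^-1) * mass g (Us :\: W) <= (s + s ^+ 2) * mass e W.
  have -> : s + s ^+ 2 = (1 + s^-1) * s ^+ 2 by field; rewrite gt_eqF.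
  by rewrite -mulrA ler_wpM2l // addr_ge0 // invr_ge0 (ltW s_gt0).
have := sqnorm_restrict_sub_le g wIs JU IsU s_gt0; rewrite -/e => h.
have := ler_wpM2l (sqr_ge0 (1 + s)) (mass_le_sqnorm e (W :|: Us)).
rewrite mass_setUD => hU.
have := mass_ge0 e (Us :\: W); have := mass_ge0 e W.
nra.
Qed.

End Projection.

Section LineRestriction.
Variables (R : realType) (p : nat).
Local Notation V := 'rV[R]_p.

Lemma is_derive_line (F : V -> R) (x d : V) (t : R) : derivable F (x + t *: d) d ->
  is_derive t (1 : R) (fun s => F (x + s *: d)) ('D_d F (x + t *: d)).
Proof.
have quotE : (fun h : R => h^-1 *: (((fun s => F (x + s *: d)) \o shift t) (h *: 1)
    - F (x + t *: d))) = (fun h => h^-1 *: ((F \o shift (x + t *: d)) (h *: d) - F (x + t *: d))).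
  by apply: funext => h /=; rewrite [h *: _]scalerRE mulr1 scalerDl addrCA addrA.
by move=> Fd; split; rewrite /derivable /derive quotE.
Qed.

Lemma derive_grad (f : V -> R) (x d : V) : differentiable f x -> 'D_d f x = dot (grad f x) d.
Proof.
move=> df; rewrite deriveE // {1}(row_sum_delta d) linear_sum /dot.
by apply: eq_bigr => i _; rewrite linearZ /= mxE deriveE // mulrC.
Qed.

Lemma taylor2_line (f : V -> R) (x d : V) (A B : R) : twice_differentiable f ->
  (forall t : R, A <= hess_quad f (x + t *: d) d <= B) ->
  A / 2 <= f (x + d) - f x - dot (grad f x) d <= B / 2.
Proof.
move=> [df ddf] hb.
have dg t : is_derive t (1 : R) (fun s => f (x + s *: d)) ('D_d f (x + t *: d)).
  exact/is_derive_line/diff_derivable.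
have dg1 t : is_derive t (1 : R) (fun s => 'D_d f (x + s *: d)) (hess_quad f (x + t *: d) d).
  exact/is_derive_line/diff_derivable.
have := taylor2_le dg dg1 (fun t => proj2 (andP (hb t))).
have := taylor2_ge dg dg1 (fun t => proj1 (andP (hb t))).
by rewrite scale0r scale1r addr0 -derive_grad // => -> ->.
Qed.

End LineRestriction.

Section RestrictedSmoothness.
Variables (R : realType) (p : nat) (f : 'rV[R]_p -> R) (U : {set 'I_p}) (alpha L : R).
Local Notation V := 'rV[R]_p.
Hypothesis f2 : twice_differentiable f.
Hypothesis hess_bounds : forall v u : V, vsupp v \subset U -> vsupp u \subset U ->
  alpha * sqnorm u <= hess_quad f v u <= L * sqnorm u.
Hypotheses (alpha_gt0 : 0 < alpha) (L_gt0 : 0 < L).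
Implicit Types x y : V.

Lemma bregman_bounds x y : vsupp x \subset U -> vsupp y \subset U ->
  alpha / 2 * sqnorm (y - x) <= f y - f x - dot (grad f x) (y - x) <= L / 2 * sqnorm (y - x).
Proof.
move=> xU yU; rewrite [alpha / 2 * _]mulrAC [L / 2 * _]mulrAC.
have -> : f y = f (x + (y - x)) by rewrite addrC subrK.
apply: taylor2_line => // t; apply: hess_bounds; last exact: vsupp_subB.
by apply: vsupp_subD => //; apply/vsupp_subZ/vsupp_subB.
Qed.

(* Lower Bregman bound at [y], upper at [x], both evaluated at [x - L^-1 D]. *)
Lemma bregman_ge_grad_gap x y : vsupp x \subset U -> vsupp y \subset U ->
  L^-1 / 2 * sqnorm (restrict (grad f x - grad f y) U) <= f x - f y - dot (grad f y) (x - y).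
Proof.
move=> xU yU; set D := restrict (grad f x - grad f y) U; set z := x - L^-1 *: D.
have zU : vsupp z \subset U by apply/vsupp_subB/vsupp_subZ/vsupp_restrict.
have /andP[lo _] := bregman_bounds yU zU.
have /andP[_ up] := bregman_bounds xU zU.
have gap : dot (grad f x) D - dot (grad f y) D = sqnorm D by rewrite -dotBl dot_restrictr.
have zy : z - y = (x - y) - L^-1 *: D by rewrite addrAC.
have zx : z - x = - (L^-1 *: D) by rewrite addrAC subrr add0r.
have E : L / 2 * (L^-1 ^+ 2 * sqnorm D) = L^-1 / 2 * sqnorm D by field; rewrite gt_eqF.
rewrite zy dotBr dotZr in lo; rewrite zx dotNr dotZr sqnormN sqnormZ E in up.
have := mulr_ge0 (divr_ge0 (ltW alpha_gt0) (ler0n R 2)) (sqnorm_ge0 (x - y - L^-1 *: D)).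
have : L^-1 * dot (grad f x) D - L^-1 * dot (grad f y) D = L^-1 * sqnorm D.
  by rewrite -mulrBr gap.
lra.
Qed.

Lemma grad_strong_monotone x y : vsupp x \subset U -> vsupp y \subset U ->
  alpha * sqnorm (x - y) <= dot (grad f x - grad f y) (x - y).
Proof.
move=> xU yU; have /andP[lo1 _] := bregman_bounds xU yU.
have /andP[lo2 _] := bregman_bounds yU xU.
rewrite -[y - x]opprB sqnormN dotNr in lo1; rewrite dotBl; lra.
Qed.

Lemma grad_cocoercive x y : vsupp x \subset U -> vsupp y \subset U ->
  L^-1 * sqnorm (restrict (grad f x - grad f y) U) <= dot (grad f x - grad f y) (x - y).
Proof.
move=> xU yU; have := bregman_ge_grad_gap xU yU; have := bregman_ge_grad_gap yU xU.
rewrite -[grad f y - _]opprB restrictN sqnormN -[y - x]opprB dotNr dotBl; lra.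
Qed.

Lemma grad_step_contraction x y : vsupp x \subset U -> vsupp y \subset U ->
  sqnorm (x - y - L^-1 *: restrict (grad f x - grad f y) U) <=
    (1 - alpha / L) * sqnorm (x - y).
Proof.
move=> xU yU.
have mon := grad_strong_monotone xU yU; have coc := grad_cocoercive xU yU.
set D := restrict (grad f x - grad f y) U in coc *.
set c := dot (grad f x - grad f y) (x - y) in mon coc.
have cross : dot (x - y) (L^-1 *: D) = L^-1 * c.
  by rewrite dotZr dotC dot_restrictl ?vsupp_subB.
have Li_ge0 : 0 <= L^-1 by rewrite invr_ge0 (ltW L_gt0).
rewrite [X in X <= _]sqnormB sqnormZ cross mulrC -mulrA expr2.
have := ler_wpM2l Li_ge0 mon; have := ler_wpM2l Li_ge0 coc; lra.
Qed.

Lemma restricted_grad_step x y : alpha <= L -> vsupp x \subset U -> vsupp y \subset U ->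
  norm2 (restrict (x - L^-1 *: grad f x) U - y) <=
    (1 - alpha / (2 * L)) * norm2 (x - y) + L^-1 * norm2 (restrict (grad f y) U).
Proof.
move=> aL xU yU.
have -> : restrict (x - L^-1 *: grad f x) U - y =
    (x - y - L^-1 *: restrict (grad f x - grad f y) U) - L^-1 *: restrict (grad f y) U.
  by rewrite !restrictB !restrictZ restrict_id // scalerBr opprB addrA addrAC addrK addrAC.
apply: le_trans (norm2D _ _) _; rewrite norm2N norm2Z ?invr_ge0 ?(ltW L_gt0) // lerD2r.
have c_ge0 : 0 <= 1 - alpha / (2 * L).
  rewrite subr_ge0 ler_pdivrMr ?mulr_gt0 // mul1r mulr_natl mulr2n (le_trans aL) //.
  by rewrite lerDl (ltW L_gt0).
apply: norm2_le_sqr; first by rewrite mulr_ge0 ?norm2_ge0.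
apply: le_trans (grad_step_contraction xU yU) _.
rewrite exprMn sqr_norm2 ler_wpM2r ?sqnorm_ge0 //.
have -> : alpha / L = 2 * (alpha / (2 * L)) by field; rewrite gt_eqF.
set a := alpha / (2 * L); rewrite -subr_ge0.
have -> : (1 - a) ^+ 2 - (1 - 2 * a) = a ^+ 2 by ring.
exact: sqr_ge0.
Qed.

End RestrictedSmoothness.

Section GeometricDecay.
Variable R : realFieldType.

Lemma contraction_recurrence_le (e : nat -> R) (s B : R) : s <= 1 -> 0 <= B ->
  (forall t, e t.+1 <= (1 - s) * e t + s * B) -> forall t, e t <= (1 - s) ^+ t * e 0%N + B.
Proof.
move=> s_le1 B_ge0 step; elim=> [|t IH]; first by rewrite expr0 mul1r lerDl.
apply: le_trans (step t) _; rewrite exprS -mulrA.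
have := ler_wpM2l (_ : 0 <= 1 - s) IH; rewrite subr_ge0 => /(_ s_le1); lra.
Qed.

Lemma expr1B_bernoulli_le1 (s : R) (n : nat) :
  0 <= s <= 1 -> (1 - s) ^+ n * (1 + n%:R * s) <= 1.
Proof.
move=> /andP[s_ge0 s_le1]; elim: n => [|n IH]; first by rewrite expr0 mul0r addr0 mulr1.
rewrite exprSr -natr1 -mulrA; apply: le_trans IH.
apply: ler_wpM2l; first by rewrite exprn_ge0 // subr_ge0.
have : 0 <= s * s * (n%:R + 1) by rewrite !mulr_ge0 // addr_ge0.
lra.
Qed.

Lemma geometric_decay_le (s a eps : R) (T : nat) : 0 < s <= 1 -> 0 < eps ->
  a / (eps * s) <= T%:R -> (1 - s) ^+ T * a <= eps.
Proof.
move=> /andP[s_gt0 s_le1] eps_gt0; rewrite ler_pdivrMr ?mulr_gt0 // => aT.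
have a_le : a <= eps * (1 + T%:R * s) by nra.
have pow_ge0 : 0 <= (1 - s) ^+ T by rewrite exprn_ge0 // subr_ge0.
apply: le_trans (ler_wpM2l pow_ge0 a_le) _.
rewrite mulrCA -[X in _ <= X]mulr1 ler_wpM2l ?(ltW eps_gt0) //.
by apply: expr1B_bernoulli_le1; rewrite (ltW s_gt0).
Qed.

End GeometricDecay.

Section IHT.
Variables (R : realType) (p M : nat) (G : 'I_M -> {set 'I_p}) (f : 'rV[R]_p -> R).
Local Notation V := 'rV[R]_p.
Local Notation gcover := (gcover G).

Lemma gnorm0_zero : gnorm0 G (0 : V) = 0%N.
Proof.
apply/eqP; rewrite -leqn0 /gnorm0 vsupp0.
by rewrite -(cards0 'I_M) Gsupp_card_le // finset.sub0set.
Qed.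

Lemma IHT_run_sparse (k : nat) (eta : R) (w : nat -> V) :
  w 0%N = 0 -> IHT_run G f k eta w -> forall t, (gnorm0 G (w t) <= k)%N.
Proof. by move=> w0 run [|t]; [rewrite w0 gnorm0_zero | exact: (run t).1]. Qed.

Lemma RSC_RSS_le (k : nat) (alpha L : R) :
  (0 < p)%N -> RSC_RSS G f k alpha L -> alpha <= L.
Proof.
move=> p_gt0 rsc; pose i0 := Ordinal p_gt0; pose e : V := delta_mx ord0 i0.
have [lo hi] := rsc 0 ltac:(by rewrite gnorm0_zero) e.
have e1 : norm2 e ^+ 2 = 1.
  rewrite sqr_norm2 /sqnorm (bigD1 i0) //= big1 ?addr0 => [|j /negbTE ji].
    by rewrite mxE !eqxx expr1n.
  by rewrite mxE ji andbF expr0n.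
by rewrite e1 !mulr1 in lo hi; exact: le_trans lo hi.
Qed.

Lemma RSC_RSS_cover (k : nat) (alpha L : R) (I : {set 'I_M}) :
  RSC_RSS G f k alpha L -> (#|I| <= k)%N -> forall v u : V,
  vsupp v \subset gcover I -> vsupp u \subset gcover I ->
  alpha * sqnorm u <= hess_quad f v u <= L * sqnorm u.
Proof.
move=> rsc Ik v u vI _; have [lo hi] := rsc v (leq_trans (Gsupp_card_le vI) Ik) u.
by rewrite -!sqr_norm2 lo hi.
Qed.

Lemma max_restr_ge0 (k : nat) (v : V) : 0 <= max_restr G k v.
Proof. exact: bigmax_ge_id. Qed.

Lemma norm2_restrict_le_max (k : nat) (v : V) S :
  (Gsupp_card G S <= k)%N -> norm2 (restrict v S) <= max_restr G k v.
Proof. by move=> Sk; apply: le_bigmax_cond. Qed.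

Lemma norm2_restrict_cover3 (k : nat) (v : V) (I1 I2 I3 : {set 'I_M}) :
  (#|I1| <= k)%N -> (#|I2| <= k)%N -> (#|I3| <= k)%N ->
  norm2 (restrict v (gcover (I1 :|: I2 :|: I3))) <= 2 * max_restr G k v.
Proof.
move=> I1k I2k I3k; set m := max_restr G k v.
have m_ge0 : 0 <= m := max_restr_ge0 k v.
have mI (I : {set 'I_M}) : (#|I| <= k)%N -> sqnorm (restrict v (gcover I)) <= m ^+ 2.
  move=> Ik; rewrite -sqr_norm2 ler_sqr ?nnegrE ?norm2_ge0 //.
  exact/norm2_restrict_le_max/(leq_trans (Gsupp_card_le (fintype.subxx _))).
apply: norm2_le_sqr; first by rewrite mulr_ge0.
rewrite !gcoverU; apply: le_trans (sqnorm_restrictU _ _ _) _.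
have := sqnorm_restrictU v (gcover I1) (gcover I2).
have := mI _ I1k; have := mI _ I2k; have := mI _ I3k.
have := sqr_ge0 m; rewrite exprMn; lra.
Qed.

End IHT.

Section IHTStep.
Variables (R : realType) (p M : nat) (G : 'I_M -> {set 'I_p}) (f : 'rV[R]_p -> R).
Variables (kstar k : nat) (alpha L : R) (wstar : 'rV[R]_p).
Local Notation V := 'rV[R]_p.
Local Notation gcover := (gcover G).
Hypotheses (GT : groups_cover G) (f2 : twice_differentiable f).
Hypotheses (alpha_gt0 : 0 < alpha) (alpha_le_L : alpha <= L).
Hypothesis rsc : RSC_RSS G f (k.*2 + kstar) alpha L.
Hypothesis wstar_sparse : (gnorm0 G wstar <= kstar)%N.
Hypothesis kstar_gt0 : (0 < kstar)%N.
Hypothesis k_large : 16 * (L / alpha) ^+ 2 * kstar%:R <= k%:R.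

Local Notation s := (alpha / (4 * L)).

Lemma L_gt0 : 0 < L.
Proof. exact: lt_le_trans alpha_le_L. Qed.

Lemma s_gt0 : 0 < s.
Proof. by rewrite divr_gt0 ?mulr_gt0 ?L_gt0. Qed.

Lemma s_le : s <= 1 / 4.
Proof.
rewrite ler_pdivrMr ?mulr_gt0 ?L_gt0 //.
by have -> : 1 / 4 * (4 * L) = L by field.
Qed.

Lemma s_le1 : s <= 1.
Proof. by apply: le_trans s_le _; rewrite ler_pdivrMr // mul1r ler1n. Qed.

Lemma kstar_le_s2k : kstar%:R <= s ^+ 2 * k%:R.
Proof.
have -> : kstar%:R = s ^+ 2 * (16 * (L / alpha) ^+ 2 * kstar%:R).
  by field; rewrite !gt_eqF ?L_gt0.
by rewrite ler_wpM2l ?sqr_ge0.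
Qed.

Lemma kstar_le_k : (kstar <= k)%N.
Proof.
rewrite -(ler_nat R); apply: le_trans kstar_le_s2k _.
by rewrite ler_piMl ?ler0n // exprn_ile1 ?s_le1 // (ltW s_gt0).
Qed.

Lemma IHT_step (x y : V) :
  (gnorm0 G x <= k)%N -> is_proj G k (x - L^-1 *: grad f x) y ->
  norm2 (y - wstar) <=
    (1 - s) * norm2 (x - wstar) + s * (10 / alpha * max_restr G k (grad f wstar)).
Proof.
move=> xk yP; set m := max_restr G k (grad f wstar).
have [Jx xJ cardJx] := Gsupp_card_gcover (vsupp x) GT.
have [Jy yJ cardJy] := Gsupp_card_gcover (vsupp y) GT.
have [Is wIs cardIs] := Gsupp_card_gcover (vsupp wstar) GT.
have Jxk : (#|Jx| <= k)%N by rewrite cardJx.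
have Jyk : (#|Jy| <= k)%N by rewrite cardJy; exact: yP.1.
have Isk : (#|Is| <= kstar)%N by rewrite cardIs.
set I := Jx :|: Jy :|: Is; set U := gcover I.
have sub_I : [/\ Jx \subset I, Jy \subset I & Is \subset I].
  by split; apply/fintype.subsetP => j; rewrite !inE => ->; rewrite ?orbT.
have [/(gcoverS G) JxU /(gcoverS G) JyU /(gcoverS G) IsU] := sub_I.
have xU : vsupp x \subset U := fintype.subset_trans xJ JxU.
have wU : vsupp wstar \subset U := fintype.subset_trans wIs IsU.
have Ik : (#|I| <= k.*2 + kstar)%N.
  apply: leq_trans (leq_card_setU _ _).1 _; rewrite -addnn leq_add //.
  by apply: leq_trans (leq_card_setU _ _).1 _; rewrite leq_add.
have hb := RSC_RSS_cover rsc Ik.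
have proj := proj_dist_le yP yJ Jyk wIs Isk kstar_le_k (leq_trans kstar_gt0 kstar_le_k)
  JyU IsU s_gt0 kstar_le_s2k.
have step := restricted_grad_step f2 hb alpha_gt0 L_gt0 alpha_le_L xU wU.
have grad_m := norm2_restrict_cover3 G (grad f wstar) Jxk Jyk (leq_trans Isk kstar_le_k).
have two_s : alpha / (2 * L) = 2 * s by field; rewrite gt_eqF ?L_gt0.
have y_le :
    norm2 (y - wstar) <= (1 + s) * norm2 (restrict (x - L^-1 *: grad f x) U - wstar).
  apply: norm2_le_sqr; first by rewrite mulr_ge0 ?norm2_ge0 // addr_ge0 // (ltW s_gt0).
  by rewrite exprMn sqr_norm2.
set e := norm2 (x - wstar) in step *; set q := L^-1 * m.
have q_ge0 : 0 <= q by rewrite mulr_ge0 ?max_restr_ge0 // invr_ge0 (ltW L_gt0).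
have -> : s * (10 / alpha * m) = 5 / 2 * q by rewrite /q; field; rewrite !gt_eqF ?L_gt0.
have grad_q : L^-1 * norm2 (restrict (grad f wstar) U) <= 2 * q.
  by rewrite /q mulrCA ler_wpM2l // invr_ge0 (ltW L_gt0).
rewrite two_s -/U in step; apply: le_trans y_le _.
have s1_ge0 : 0 <= 1 + s by rewrite addr_ge0 // (ltW s_gt0).
have := ler_wpM2l s1_ge0 (le_trans step (lerD (lexx _) grad_q)).
have := mulr_ge0 (mulr_ge0 (ltW s_gt0) (ltW s_gt0)) (norm2_ge0 (x - wstar) : 0 <= e).
have := ler_wpM2r q_ge0 s_le.
lra.
Qed.

Lemma IHT_error_bound (w : nat -> V) (eps : R) (T : nat) :
  w 0%N = 0 -> IHT_run G f k L^-1 w -> 0 < eps ->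
  4 * (L / alpha) * (norm2 wstar / eps) <= T%:R ->
  norm2 (w T - wstar) <= eps + 10 / alpha * max_restr G k (grad f wstar).
Proof.
move=> w0 run eps_gt0 T_large; set B := 10 / alpha * _.
have B_ge0 : 0 <= B by rewrite mulr_ge0 ?max_restr_ge0 // divr_ge0 // (ltW alpha_gt0).
have step t := IHT_step (IHT_run_sparse w0 run t) (run t).
have := contraction_recurrence_le s_le1 B_ge0 step T; rewrite w0 sub0r norm2N.
have : (1 - s) ^+ T * norm2 wstar <= eps.
  apply: geometric_decay_le => //; first by rewrite s_gt0 s_le1.
  have -> : norm2 wstar / (eps * s) = 4 * (L / alpha) * (norm2 wstar / eps).
    by field; rewrite !gt_eqF ?L_gt0.
  exact: T_large.
lra.
Qed.

End IHTStep.

Unset Implicit Arguments.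

Theorem theorem3 (R : realType) :
  exists c1 c2 : R, 0 < c1 /\ 0 < c2 /\
  forall (p M : nat) (G : 'I_M -> {set 'I_p}) (f : 'rV[R]_p -> R)
    (kstar k : nat) (alpha L : R) (wstar : 'rV[R]_p)
    (w : nat -> 'rV[R]_p) (eps : R) (T : nat),
    groups_cover G ->
    twice_differentiable f ->
    (0 < kstar)%N ->
    (gnorm0 G wstar <= kstar)%N ->
    (forall v : 'rV[R]_p, (gnorm0 G v <= kstar)%N -> f wstar <= f v) ->
    0 < alpha ->
    RSC_RSS G f (k.*2 + kstar) alpha L ->
    c1 * (L / alpha) ^+ 2 * kstar%:R <= k%:R ->
    w 0%N = 0 ->
    IHT_run G f k (L^-1) w ->
    0 < eps ->
    c2 * (L / alpha) * (norm2 wstar / eps) <= T%:R ->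
    norm2 (w T - wstar) <=
      eps + 10 * L / alpha * ((2 / L) * max_restr G k (grad f wstar)).
Proof.
(* With [s = alpha / (4 L)], [c1 = 16] gives [kstar <= s^2 k] and [c2 = 4] gives
   [T s >= norm2 wstar / eps]. *)
exists 16, 4; do 2!split => //.
move=> p M G f kstar k alpha L wstar w eps T GT f2 kstar_gt0 wstar_sp _ alpha_gt0 rsc k_large
  w0 run eps_gt0 T_large.
set m := max_restr G k (grad f wstar); have m_ge0 : 0 <= m := max_restr_ge0 G k _.
have [p0|p_gt0] := posnP p.
  have -> : norm2 (w T - wstar) = 0.
    by rewrite /norm2 big1 ?sqrtr0 // => i; have := ltn_ord i; lia.
  have [->|L_neq0] := eqVneq L 0; first by rewrite !(mulr0, mul0r) addr0 (ltW eps_gt0).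
  have -> : 10 * L / alpha * (2 / L * m) = 20 * m / alpha by field; rewrite gt_eqF.
  by rewrite addr_ge0 ?divr_ge0 ?mulr_ge0 ?(ltW eps_gt0) ?(ltW alpha_gt0).
have aL := RSC_RSS_le p_gt0 rsc; have L_gt0 := lt_le_trans alpha_gt0 aL.
apply: le_trans (IHT_error_bound GT f2 alpha_gt0 aL rsc wstar_sp kstar_gt0 k_large
  w0 run eps_gt0 T_large) _.
rewrite -/m lerD2l.
have -> : 10 * L / alpha * (2 / L * m) = 2 * (10 / alpha * m) by field; rewrite !gt_eqF.
have : 0 <= 10 / alpha * m by rewrite mulr_ge0 // divr_ge0 // (ltW alpha_gt0).
lra.
Qed.
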